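(* Let $G$ be a profinite group satisfying the maximum condition on closed subgroups, and let $H$ be an open normal subgroup of $G$. Then the maps $G'\mapsto \mathrm{i}_H(G'\cap H)$ and $H'\mapsto \mathrm{i}_G(H')$ are well-defined, mutually inverse bijections between the set of isolated orbital closed subgroups of $G$ and the set of isolated orbital closed subgroups of $H$.
   Context: A closed subgroup $K$ of a profinite group $X$ is $X$-orbital if $\mathbf{N}_X(K)$ is open in $X$. An orbital closed subgroup $K$ is $X$-isolated orbital if for every $X$-orbital closed subgroup $K'$ with $K\lneq K'\le X$ we have $[K':K]=\infty$. For an $X$-orbital closed subgroup $K$, its isolator $\mathrm{i}_X(K)$ is the closed subgroup of $X$ generated by all $X$-orbital closed subgroups $L$ with $K\le L$ and $[L:K]<\infty$. *)

From Stdlib Require Import List.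
Set Implicit Arguments.

Record TopGroup := {
  carrier :> Type;
  mul : carrier -> carrier -> carrier;
  inv : carrier -> carrier;
  one : carrier;
  is_open : (carrier -> Prop) -> Prop;
  mulA : forall x y z, mul x (mul y z) = mul (mul x y) z;
  mul1g : forall x, mul one x = x;
  mulVg : forall x, mul (inv x) x = one;
  open_full : is_open (fun _ => True);
  open_union : forall F : (carrier -> Prop) -> Prop,
      (forall U, F U -> is_open U) -> is_open (fun x => exists U, F U /\ U x);
  open_inter : forall U V, is_open U -> is_open V -> is_open (fun x => U x /\ V x);
  mul_cont : forall W x y, is_open W -> W (mul x y) ->
      exists U V, is_open U /\ is_open V /\ U x /\ V y /\
                  (forall u v, U u -> V v -> W (mul u v));
  inv_cont : forall W, is_open W -> is_open (fun x => W (inv x))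
}.

Section Defs.
Variable G : TopGroup.

Definition subset (A B : G -> Prop) : Prop := forall x, A x -> B x.
Definition seteq (A B : G -> Prop) : Prop := forall x, A x <-> B x.
Definition setI (A B : G -> Prop) : G -> Prop := fun x => A x /\ B x.

Definition is_closed (C : G -> Prop) : Prop := is_open G (fun x => ~ C x).

Definition compact : Prop :=
  forall F : (G -> Prop) -> Prop, (forall U, F U -> is_open G U) ->
    (forall x : G, exists U, F U /\ U x) ->
    exists s : list (G -> Prop), (forall U, In U s -> F U) /\
      (forall x : G, exists U, In U s /\ U x).

Definition hausdorff : Prop :=
  forall x y : G, x <> y -> exists U V, is_open G U /\ is_open G V /\ U x /\ V y /\
    (forall z, ~ (U z /\ V z)).

Definition connected (S : G -> Prop) : Prop :=
  ~ exists U V, is_open G U /\ is_open G V /\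
      (forall x, S x -> U x \/ V x) /\
      (exists x, S x /\ U x) /\ (exists x, S x /\ V x) /\
      (forall x, ~ (S x /\ U x /\ V x)).

Definition totally_disconnected : Prop :=
  forall S, connected S -> forall x y, S x -> S y -> x = y.

Definition profinite : Prop := compact /\ hausdorff /\ totally_disconnected.

Definition is_subgroup (K : G -> Prop) : Prop :=
  K (one G) /\ (forall x y, K x -> K y -> K (mul G x y)) /\ (forall x, K x -> K (inv G x)).

Definition is_normal (H : G -> Prop) : Prop :=
  is_subgroup H /\ forall g h, H h -> H (mul G (mul G g h) (inv G g)).

Definition open_in (X S : G -> Prop) : Prop :=
  subset S X /\ exists U, is_open G U /\ forall x, X x -> (S x <-> U x).
Definition closed_in (X S : G -> Prop) : Prop :=
  subset S X /\ exists C, is_closed C /\ forall x, X x -> (S x <-> C x).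

Definition closed_subgroup_in (X K : G -> Prop) : Prop :=
  is_subgroup K /\ closed_in X K.

Definition max_cond_closed : Prop :=
  forall F : (G -> Prop) -> Prop,
    (forall K, F K -> closed_subgroup_in (fun _ => True) K) ->
    (exists K, F K) ->
    exists M, F M /\ forall K, F K -> subset M K -> subset K M.

Definition normalizer (X K : G -> Prop) : G -> Prop :=
  fun x => X x /\ forall k, K k <-> K (mul G (mul G x k) (inv G x)).

(* [L : K] < infinity (for K <= L): finitely many left cosets of K in L *)
Definition fin_index (L K : G -> Prop) : Prop :=
  exists s : list G, forall y, L y -> exists l, In l s /\ L l /\ K (mul G (inv G l) y).

Definition orbital (X K : G -> Prop) : Prop :=
  closed_subgroup_in X K /\ open_in X (normalizer X K).

Definition isolated_orbital (X K : G -> Prop) : Prop :=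
  orbital X K /\
  forall K', orbital X K' -> subset K K' -> ~ subset K' K -> ~ fin_index K' K.

(* i_X(K): the closed subgroup of X generated by all X-orbital closed L with
   K <= L and [L:K] finite, i.e. the intersection of all closed subgroups of X
   containing all such L. *)
Definition isolator (X K : G -> Prop) : G -> Prop :=
  fun x => forall M, closed_subgroup_in X M ->
    (forall L, orbital X L -> subset K L -> fin_index L K -> subset L M) -> M x.

End Defs.

(* For an orbital closed subgroup K of an open subgroup X, the X-orbital closed subgroups L
   containing K with finite index form a directed family: the subgroup generated by two of them
   still contains K with finite index. Indeed all normalizers involved are open, hence of finite
   index by compactness; so the core of K in the join has finite index in K, the join is
   generated by finitely many conjugates of the two subgroups, each finite modulo the core, and
   Dietzmann's lemma bounds the number of cosets. The maximum condition then provides a greatest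
   member, which is the isolator i_X(K). Consequently i_X(K) is isolated, i_X fixes isolated
   subgroups, and i_X(L) = i_X(K) for every member L. As H has finite index, G' is commensurable
   in this sense with G' ∩ H, and H' with i_G(H') ∩ H, which yields both compositions. *)

From Stdlib Require Import List Classical FunctionalExtensionality PropExtensionality Lia.
Import ListNotations.

Section Profinite.

Variable G : TopGroup.

Local Notation "x ** y" := (mul G x y) (at level 40, left associativity).
Local Notation "x ^-1" := (inv G x) (at level 3, format "x ^-1").
Local Notation e := (one G).
Local Notation subg := (is_subgroup G).

Lemma mulgA (x y z : G) : x ** y ** z = x ** (y ** z).
Proof. now rewrite mulA. Qed.
Lemma mulKg (x y : G) : x^-1 ** (x ** y) = y.
Proof. now rewrite mulA, mulVg, mul1g. Qed.
Lemma mulgV (x : G) : x ** x^-1 = e.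
Proof. rewrite <- (mulKg x^-1 (x ** x^-1)), (mulKg x x^-1). apply mulVg. Qed.
Lemma mulg1 (x : G) : x ** e = x.
Proof. rewrite <- (mulVg G x), mulA, mulgV. apply mul1g. Qed.
Lemma invgK (x : G) : x^-1^-1 = x.
Proof. rewrite <- (mulg1 x^-1^-1), <- (mulVg G x). apply mulKg. Qed.
Lemma mulKVg (x y : G) : x ** (x^-1 ** y) = y.
Proof. now rewrite mulA, mulgV, mul1g. Qed.
Lemma invgM (x y : G) : (x ** y)^-1 = y^-1 ** x^-1.
Proof.
  assert (H : x ** y ** (y^-1 ** x^-1) = e) by (rewrite mulgA, mulKVg; apply mulgV).
  rewrite <- (mulg1 (x ** y)^-1), <- H. apply mulKg.
Qed.
Lemma invg1 : e^-1 = e.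
Proof. rewrite <- (mulg1 e^-1). apply mulVg. Qed.

Hint Rewrite mulgA mulKg mulgV mulg1 mul1g mulVg invgK mulKVg invgM invg1 : group.
Ltac gsimpl := autorewrite with group in *.

Lemma open_iff (A B : G -> Prop) : (forall x, A x <-> B x) -> is_open G A -> is_open G B.
Proof.
  intros H HA. replace B with A; auto.
  apply functional_extensionality; intro x; apply propositional_extensionality; auto.
Qed.

Lemma open_lmul (U : G -> Prop) (a : G) : is_open G U -> is_open G (fun x => U (a ** x)).
Proof.
  intro HU.
  apply open_iff with (A := fun x => exists V, (is_open G V /\ forall v, V v -> U (a ** v)) /\ V x).
  - intro x; split.
    + intros [V [[_ H] Hx]]; auto.
    + intro Hx. destruct (mul_cont G U a x HU Hx) as [U1 [V [_ [HV [Ha [Hxv Hm]]]]]].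
      exists V; repeat split; auto.
  - apply open_union. intros V [HV _]; auto.
Qed.

Lemma open_or (A B : G -> Prop) : is_open G A -> is_open G B -> is_open G (fun x => A x \/ B x).
Proof.
  intros HA HB.
  apply open_iff with (A := fun x => exists U, (U = A \/ U = B) /\ U x).
  - intro x; split.
    + intros [U [[-> | ->] Hx]]; auto.
    + intros [Hx | Hx]; eauto.
  - apply open_union. intros U [-> | ->]; auto.
Qed.

Lemma open_forall_list {T} (P : T -> G -> Prop) (s : list T) :
  (forall t, In t s -> is_open G (P t)) -> is_open G (fun x => forall t, In t s -> P t x).
Proof.
  induction s as [|a s IH]; intro Ho.
  - apply open_iff with (A := fun _ => True); [intros x; split; auto; intros _ t []|].
    apply open_full.
  - apply open_iff with (A := fun x => P a x /\ (forall t, In t s -> P t x)).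
    + intro x; split.
      * intros [H1 H2] t [<- | Ht]; auto.
      * intro H; split; [apply H; left | intros t Ht; apply H; right]; auto.
    + apply open_inter; [apply Ho; left; auto|].
      apply IH. intros; apply Ho; right; auto.
Qed.

Lemma closed_and (A B : G -> Prop) :
  is_closed G A -> is_closed G B -> is_closed G (fun x => A x /\ B x).
Proof.
  intros HA HB. apply open_iff with (A := fun x => ~ A x \/ ~ B x); [intro x; tauto|].
  apply open_or; auto.
Qed.

Lemma open_translates (A P : G -> Prop) : is_open G A ->
  is_open G (fun x => exists W, (exists a, P a /\ forall y, W y <-> A (a^-1 ** y)) /\ W x).
Proof.
  intro HA. apply open_union. intros W [a [_ HW]].
  apply open_iff with (A := fun y => A (a^-1 ** y)); [intro y; rewrite HW; tauto|].
  apply open_lmul; auto.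
Qed.

Lemma open_subgroup_of_nbhd (A V : G -> Prop) :
  subg A -> is_open G V -> V e -> (forall x, V x -> A x) -> is_open G A.
Proof.
  intros [_ [HAm _]] HV Ve HVA.
  apply open_iff with (2 := open_translates V A HV). intro x; split.
  - intros [W [[a [Ha HW]] Hx]]. apply HW, HVA in Hx.
    specialize (HAm _ _ Ha Hx). gsimpl. auto.
  - intro Hx. exists (fun y => V (x^-1 ** y)). split; [exists x; split; [|intro]; tauto|].
    gsimpl. auto.
Qed.

Lemma open_subgroup_closed (V : G -> Prop) : subg V -> is_open G V -> is_closed G V.
Proof.
  intros [HV1 [HVm HVi]] HV.
  apply open_iff with (2 := open_translates V (fun a => ~ V a) HV). intro x; split.
  - intros [W [[a [Ha HW]] Hx]] Hx'. apply HW in Hx. apply Ha.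
    specialize (HVm _ _ Hx' (HVi _ Hx)). gsimpl. auto.
  - intro Hx. exists (fun y => V (x^-1 ** y)). split; [exists x; split; [|intro]; tauto|].
    gsimpl. auto.
Qed.

Lemma closed_in_open_subgroup (X K : G -> Prop) :
  subg X -> is_open G X -> closed_in G X K -> is_closed G K.
Proof.
  intros HX HXo [HKX [C [HC HKC]]].
  apply open_iff with (A := fun x => ~ X x \/ ~ C x).
  - intro x; split.
    + intros [H | H] HK; apply H; [|apply HKC]; auto.
    + intro H. destruct (classic (X x)) as [Hx | Hx]; [right | left]; auto.
      intro Hc; apply H, HKC; auto.
  - apply open_or; auto. apply open_subgroup_closed; auto.
Qed.

Definition conj_set (g : G) (A : G -> Prop) : G -> Prop := fun y => A (g^-1 ** y ** g).

Definition norms (x : G) (A : G -> Prop) : Prop := forall k, A k <-> A (x ** k ** x^-1).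

Lemma subgroup_and (A B : G -> Prop) : subg A -> subg B -> subg (fun x => A x /\ B x).
Proof.
  intros [A1 [Am Ai]] [B1 [Bm Bi]]. split; [|split]; try tauto.
  - intros x y [] []; split; auto.
  - intros x []; split; auto.
Qed.

Lemma conj_set_subgroup (g : G) (A : G -> Prop) : subg A -> subg (conj_set g A).
Proof.
  intros [A1 [Am Ai]]. unfold conj_set. split; [|split].
  - gsimpl. auto.
  - intros x y Hx Hy. specialize (Am _ _ Hx Hy). gsimpl. auto.
  - intros x Hx. specialize (Ai _ Hx). gsimpl. auto.
Qed.

Lemma norms_subgroup (A : G -> Prop) : subg (fun x => norms x A).
Proof.
  unfold norms. split; [|split].
  - intro k. gsimpl. tauto.
  - intros x y Hx Hy k. rewrite (Hy k), (Hx (y ** k ** y^-1)). gsimpl. tauto.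
  - intros x Hx k. rewrite (Hx (x^-1 ** k ** x^-1^-1)). gsimpl. tauto.
Qed.

Lemma norms_conj (A : G -> Prop) n z : norms n A -> (A (n^-1 ** z ** n) <-> A z).
Proof. intros Hn. rewrite (Hn (n^-1 ** z ** n)). gsimpl. tauto. Qed.

Lemma normalizer_subgroup (X A : G -> Prop) : subg X -> subg (normalizer G X A).
Proof. intro HX. apply (subgroup_and X (fun x => norms x A) HX (norms_subgroup A)). Qed.

Lemma list_choice {A B} (P : A -> B -> Prop) (s : list A) :
  (forall a, In a s -> exists b, P a b) ->
  exists s', forall a, In a s -> exists b, In b s' /\ P a b.
Proof.
  induction s as [|a s IH]; intro H.
  - exists []; intros _ [].
  - destruct (H a (or_introl eq_refl)) as [b Hb].
    destruct IH as [s' Hs']; [intros; apply H; right; auto|].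
    exists (b :: s'). intros a' [<- | Ha'].
    + exists b; split; [left|]; auto.
    + destruct (Hs' a' Ha') as [b' [Hb' Hp]]. exists b'; split; [right|]; auto.
Qed.

Lemma fin_index_refl (K : G -> Prop) : subg K -> fin_index G K K.
Proof.
  intros HK. exists [e]. intros y Hy. exists e. split; [left; auto|]. split.
  - apply HK.
  - gsimpl. auto.
Qed.

Lemma fin_index_mono (L K K' : G -> Prop) :
  fin_index G L K -> (forall x, K x -> K' x) -> fin_index G L K'.
Proof.
  intros [s Hs] HK. exists s. intros y Hy. destruct (Hs y Hy) as [l [H1 [H2 H3]]]. eauto.
Qed.

Lemma fin_index_iff (L L' K : G -> Prop) :
  (forall x, L x <-> L' x) -> fin_index G L K -> fin_index G L' K.
Proof.
  intros HL [s Hs]. exists s. intros y Hy. apply HL in Hy.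
  destruct (Hs y Hy) as [l [H1 [H2 H3]]]. exists l. rewrite <- HL. auto.
Qed.

Lemma fin_index_or (A B K : G -> Prop) :
  fin_index G A K -> fin_index G B K -> fin_index G (fun x => A x \/ B x) K.
Proof.
  intros [s Hs] [t Ht]. exists (s ++ t). intros y [Hy | Hy].
  - destruct (Hs y Hy) as [l [H1 [H2 H3]]]. exists l. rewrite in_app_iff. auto.
  - destruct (Ht y Hy) as [l [H1 [H2 H3]]]. exists l. rewrite in_app_iff. auto.
Qed.

(* Representatives of the cosets of [B] in [A] that meet [C] can be moved into [C]. *)
Lemma fin_index_meet (A B C : G -> Prop) :
  fin_index G A B -> (forall x, C x -> A x) -> subg C -> subg B ->
  fin_index G C (fun x => B x /\ C x).
Proof.
  intros [s Hs] HCA [_ [HCm HCi]] [_ [HBm HBi]].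
  destruct (list_choice (fun l c => (exists c', C c' /\ B (l^-1 ** c')) -> C c /\ B (l^-1 ** c)) s)
    as [s' Hs'].
  { intros l _. destruct (classic (exists c', C c' /\ B (l^-1 ** c'))) as [[c' Hc'] | Hn].
    - exists c'; auto.
    - exists e; intro H; contradiction. }
  exists s'. intros y Hy. destruct (Hs y (HCA y Hy)) as [l [Hl [HAl HBl]]].
  destruct (Hs' l Hl) as [c [Hc Hcp]].
  destruct Hcp as [HCc HBc]; [exists y; auto|].
  exists c. split; [|split]; auto. split; [|apply HCm]; auto.
  specialize (HBm _ _ (HBi _ HBc) HBl). gsimpl. auto.
Qed.

Lemma fin_index_trans (A B C : G -> Prop) :
  subg A -> (forall x, B x -> A x) -> fin_index G A B -> fin_index G B C -> fin_index G A C.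
Proof.
  intros HA HBA [sA HsA] [sB HsB].
  exists (flat_map (fun a => map (fun b => a ** b) sB) sA).
  intros y Hy. destruct (HsA y Hy) as [a [Ha [HAa HBa]]].
  destruct (HsB _ HBa) as [b [Hb [HBb HCb]]].
  exists (a ** b). split; [|split].
  - apply in_flat_map. exists a; split; auto. apply in_map; auto.
  - apply HA; auto.
  - gsimpl. auto.
Qed.

Lemma fin_index_inter (K A1 A2 : G -> Prop) :
  subg A1 -> subg A2 -> (forall x, A1 x -> K x) -> subg K ->
  fin_index G K A1 -> fin_index G K A2 -> fin_index G K (fun x => A1 x /\ A2 x).
Proof.
  intros H1 H2 H1K HK F1 F2.
  assert (F3 : fin_index G A1 (fun x => A2 x /\ A1 x)) by (eapply fin_index_meet; eauto).
  eapply fin_index_mono; [eapply fin_index_trans; eauto|]. intros x []; auto.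
Qed.

Lemma fin_index_conj (g : G) (A B : G -> Prop) :
  fin_index G A B -> fin_index G (conj_set g A) (conj_set g B).
Proof.
  intros [s Hs]. exists (map (fun l => g ** l ** g^-1) s).
  intros y Hy. unfold conj_set in *. destruct (Hs _ Hy) as [l [Hl [HAl HBl]]].
  exists (g ** l ** g^-1). split; [apply in_map_iff; exists l; split; auto|]. gsimpl. auto.
Qed.

(* Compactness applied to the cover by left translates of [V]. *)
Lemma open_subgroup_fin_index (V : G -> Prop) :
  compact G -> subg V -> is_open G V -> fin_index G (fun _ => True) V.
Proof.
  intros Hc HV Ho.
  destruct (Hc (fun W => exists a, forall y, W y <-> V (a^-1 ** y))) as [s [Hs1 Hs2]].
  - intros W [a HW]. apply open_iff with (A := fun y => V (a^-1 ** y)); [intro; rewrite HW; tauto|].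
    apply open_lmul; auto.
  - intro x. exists (fun y => V (x^-1 ** y)). split; [exists x; tauto|]. gsimpl. apply HV.
  - destruct (list_choice (fun W a => forall y, W y <-> V (a^-1 ** y)) s) as [s' Hs'];
      [intros W HW; apply Hs1; auto|].
    exists s'. intros y _. destruct (Hs2 y) as [W [HW HWy]].
    destruct (Hs' W HW) as [a [Ha HaW]]. exists a; repeat split; auto. apply HaW; auto.
Qed.

(* [J] is a finite union of translates of the closed set [K]. *)
Lemma fin_index_closed (J K : G -> Prop) :
  subg J -> (forall x, K x -> J x) -> is_closed G K -> fin_index G J K -> is_closed G J.
Proof.
  intros HJ HKJ HKc [s Hs].
  apply open_iff with (A := fun y => forall l, In l s -> ~ (J l /\ K (l^-1 ** y))).
  - intro y; split.
    + intros H Hy. destruct (Hs y Hy) as [l [Hl [Jl Kl]]]. eapply H; eauto.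
    + intros H l Hl [Jl Kl]. apply H.
      pose proof (proj1 (proj2 HJ) _ _ Jl (HKJ _ Kl)). gsimpl. auto.
  - apply open_forall_list. intros l _. destruct (classic (J l)) as [Jl | Jl].
    + apply open_iff with (A := fun y => ~ K (l^-1 ** y)); [intro; tauto|].
      apply (open_lmul (fun z => ~ K z) l^-1). exact HKc.
    + apply open_iff with (A := fun _ => True); [intro; tauto|]. apply open_full.
Qed.

Fixpoint prodl (ws : list G) : G :=
  match ws with [] => e | w :: ws => w ** prodl ws end.

Definition products (S : G -> Prop) : G -> Prop :=
  fun y => exists ws, Forall S ws /\ prodl ws = y.

Lemma prodl_app (a b : list G) : prodl (a ++ b) = prodl a ** prodl b.
Proof. induction a; simpl; gsimpl; auto. rewrite IHa. gsimpl. auto. Qed.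

Lemma prodl_conj (x : G) (b : list G) :
  prodl (map (fun y => x ** y ** x^-1) b) = x ** prodl b ** x^-1.
Proof. induction b; simpl; gsimpl; auto. rewrite IHb. gsimpl. auto. Qed.

Lemma prodl_rev_inv (ws : list G) : prodl (rev (map (inv G) ws)) = (prodl ws)^-1.
Proof. induction ws; simpl; gsimpl; auto. rewrite prodl_app, IHws. simpl. gsimpl. auto. Qed.

Lemma prodl_collapse (a b c : list G) (x : G) :
  prodl (a ++ x :: b ++ x :: c) = prodl (a ++ map (fun y => x ** y ** x^-1) b ++ (x ** x) :: c).
Proof. rewrite !prodl_app. simpl. rewrite prodl_app, prodl_conj. simpl. gsimpl. auto. Qed.

Lemma products_incl (S : G -> Prop) x : S x -> products S x.
Proof. intro H. exists [x]. split; [constructor; auto|]. simpl; gsimpl; auto. Qed.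

Lemma products_min (S M : G -> Prop) :
  subg M -> (forall x, S x -> M x) -> forall x, products S x -> M x.
Proof.
  intros HM HSM x [ws [Hw <-]]. induction Hw; simpl; [apply HM|]. apply HM; auto.
Qed.

Lemma products_subgroup (S : G -> Prop) : (forall x, S x -> S x^-1) -> subg (products S).
Proof.
  intros HSi. split; [|split].
  - exists []; split; auto.
  - intros x y [a [Ha <-]] [b [Hb <-]]. exists (a ++ b). split.
    + apply Forall_app; auto.
    + apply prodl_app.
  - intros x [a [Ha <-]]. exists (rev (map (inv G) a)). split.
    + apply Forall_rev, Forall_map. eapply Forall_impl; [|exact Ha]. auto.
    + apply prodl_rev_inv.
Qed.

Lemma norms_products (S : G -> Prop) x : norms x S -> norms x (products S).
Proof.
  assert (Hconj : forall z y, norms z S -> products S y -> products S (z ** y ** z^-1)).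
  { intros z y Nz [ws [Hw <-]]. exists (map (fun w => z ** w ** z^-1) ws). split.
    - apply Forall_map. eapply Forall_impl; [|exact Hw]. intros w Hw'. apply (proj1 (Nz w)); auto.
    - apply prodl_conj. }
  intros Nx k. split; [apply Hconj; auto|].
  intro H. pose proof (Hconj x^-1 _ (proj2 (proj2 (norms_subgroup S)) x Nx) H). gsimpl. auto.
Qed.

Fixpoint words {A} (C : list A) (n : nat) : list (list A) :=
  match n with 0 => [[]] | S n => [] :: flat_map (fun c => map (cons c) (words C n)) C end.

Lemma in_words {A} (C : list A) n w :
  length w <= n -> (forall c, In c w -> In c C) -> In w (words C n).
Proof.
  revert w; induction n as [|n IH]; intros w Hl Hc.
  - destruct w; [left; auto | simpl in Hl; lia].
  - destruct w as [|a w]; [left; auto|]. right. apply in_flat_map. exists a. split.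
    + apply Hc; left; auto.
    + apply in_map. apply IH; [simpl in Hl; lia|]. intros c H; apply Hc; right; auto.
Qed.

Lemma not_NoDup_split {A} (l : list A) : ~ NoDup l -> exists a x b c, l = a ++ x :: b ++ x :: c.
Proof.
  induction l as [|y l IH]; intro H.
  - exfalso; apply H; constructor.
  - destruct (classic (In y l)) as [Hy | Hy].
    + destruct (in_split _ _ Hy) as [b [c ->]]. exists [], y, b, c. auto.
    + destruct IH as [a [x [b [c ->]]]]; [intro Hn; apply H; constructor; auto|].
      exists (y :: a), x, b, c. auto.
Qed.

Section Dietzmann.

Variables (J K0 S : G -> Prop) (C : list G).
Hypotheses (HJ : subg J) (HK0 : subg K0)
  (K0_normal : forall d y, J d -> K0 y -> K0 (d ** y ** d^-1))
  (S_J : forall y, S y -> J y)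
  (S_conj : forall x y, J x -> S y -> S (x ** y ** x^-1))
  (S_square : forall y, S y -> S (y ** y))
  (S_reps : forall y, S y -> exists c, In c C /\ S c /\ K0 (c^-1 ** y)).

Lemma prodl_cong (wc ws : list G) :
  Forall2 (fun c y => S c /\ S y /\ K0 (c^-1 ** y)) wc ws ->
  K0 ((prodl wc)^-1 ** prodl ws).
Proof.
  intros H; induction H as [|c y wc ws [Sc [Sy Kcy]] Hcong IH]; simpl.
  - gsimpl. apply HK0.
  - assert (Jwc : J (prodl wc)).
    { clear -HJ S_J Hcong. induction Hcong; simpl; [apply HJ|]. apply HJ; [apply S_J|]; tauto. }
    pose proof (K0_normal (prodl wc)^-1 _ (proj2 (proj2 HJ) _ Jwc) Kcy) as H1.
    pose proof (proj1 (proj2 HK0) _ _ H1 IH). gsimpl. auto.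
Qed.

Lemma reps_list (ws : list G) :
  Forall S ws -> exists wc, Forall2 (fun c y => (In c C /\ S c) /\ S y /\ K0 (c^-1 ** y)) wc ws.
Proof.
  intros H; induction H as [|y ws Sy _ [wc Hwc]]; [exists []; constructor|].
  destruct (S_reps y Sy) as [c Hc]. exists (c :: wc); constructor; tauto.
Qed.

(* A repeated representative [x] is removed by [a x b x c = a (x b x^-1) (x x) c], which keeps
   all letters in [S] and shortens the word. *)
Lemma shorten_word n (ws : list G) : length ws <= n -> Forall S ws ->
  exists ws', Forall (fun c => In c C /\ S c) ws' /\ length ws' <= length C /\
              K0 ((prodl ws')^-1 ** prodl ws).
Proof.
  revert ws; induction n as [|n IH]; intros ws Hl HS.
  - destruct ws; [|simpl in Hl; lia]. exists []. simpl. gsimpl. split; [|split]; auto; [lia|apply HK0].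
  - destruct (reps_list ws HS) as [wc Hwc].
    assert (Hlen : length wc = length ws) by (eapply Forall2_length; eauto).
    assert (HwcC : Forall (fun c => In c C /\ S c) wc).
    { clear -Hwc. induction Hwc; constructor; tauto. }
    assert (Hcong : K0 ((prodl wc)^-1 ** prodl ws)).
    { apply prodl_cong. eapply Forall2_impl; [|exact Hwc]. intros c y H; cbv beta in H; tauto. }
    destruct (classic (NoDup wc)) as [Hnd | Hnd].
    + exists wc. split; [|split]; auto.
      apply NoDup_incl_length; auto. intros c Hc. rewrite Forall_forall in HwcC. apply HwcC; auto.
    + destruct (not_NoDup_split wc Hnd) as [a [x [b [c Heq]]]].
      set (w2 := a ++ map (fun y => x ** y ** x^-1) b ++ (x ** x) :: c).
      rewrite Heq, !Forall_app, Forall_cons_iff, Forall_app, Forall_cons_iff in HwcC.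
      destruct HwcC as [Fa [[_ Sx] [Fb [_ Fc]]]].
      assert (HS2 : Forall S w2).
      { unfold w2. rewrite !Forall_app. split; [|split].
        - eapply Forall_impl; [|exact Fa]. intros y []; auto.
        - rewrite Forall_map. eapply Forall_impl; [|exact Fb]. intros y [_ Sy]. apply S_conj; auto.
        - constructor; auto. eapply Forall_impl; [|exact Fc]. intros y []; auto. }
      assert (Hl2 : length w2 <= n).
      { assert (length wc = length w2 + 1); [|lia].
        rewrite Heq. unfold w2. rewrite !length_app. simpl. rewrite length_app, length_map. simpl. lia. }
      destruct (IH w2 Hl2 HS2) as [ws' [F' [L' K']]].
      exists ws'. split; [|split]; auto.
      unfold w2 in K'. rewrite <- prodl_collapse, <- Heq in K'.
      pose proof (proj1 (proj2 HK0) _ _ K' Hcong). gsimpl. auto.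
Qed.

End Dietzmann.

Lemma dietzmann (J K0 S : G -> Prop) : subg J -> subg K0 ->
  (forall d y, J d -> K0 y -> K0 (d ** y ** d^-1)) -> (forall y, S y -> J y) ->
  (forall x y, J x -> S y -> S (x ** y ** x^-1)) -> (forall y, S y -> S (y ** y)) ->
  fin_index G S K0 -> fin_index G (products S) K0.
Proof.
  intros HJ HK0 K0n SJ Sc Ss [C HC].
  exists (map prodl (words C (length C))).
  intros y [ws [Hws <-]].
  destruct (shorten_word J K0 S C HJ HK0 K0n SJ Sc Ss HC (length ws) ws (le_n _) Hws)
    as [ws' [F' [L' K']]].
  exists (prodl ws'). split; [|split]; auto.
  - apply in_map, in_words; auto. intros c Hc. rewrite Forall_forall in F'. apply F'; auto.
  - exists ws'. split; auto. eapply Forall_impl; [|exact F']. intros y []; auto.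
Qed.

Definition commensurates (g : G) (K : G -> Prop) : Prop :=
  fin_index G K (fun y => K y /\ conj_set g K y).

Lemma commensurates_mul (K : G -> Prop) g h : subg K ->
  commensurates g K -> commensurates h K -> commensurates (g ** h) K.
Proof.
  intros HK Fg Fh.
  assert (HKg : subg (fun y => K y /\ conj_set g K y)).
  { apply subgroup_and, conj_set_subgroup; auto. }
  assert (HKgh : subg (conj_set g (fun y => K y /\ conj_set h K y))).
  { apply conj_set_subgroup, subgroup_and, conj_set_subgroup; auto. }
  pose proof (fin_index_meet _ _ _ (fin_index_conj g _ _ Fh) (fun x H => proj2 H) HKg HKgh) as F.
  eapply fin_index_mono; [exact (fin_index_trans _ _ _ HK (fun x H => proj1 H) Fg F)|].
  unfold conj_set. intros x [[_ H] [Kx _]]. split; auto. gsimpl. auto.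
Qed.

Lemma commensurates_of_fin_index (K L : G -> Prop) w : subg K -> subg L ->
  (forall x, K x -> L x) -> fin_index G L K -> L w -> commensurates w K.
Proof.
  intros HK [L1 [Lm Li]] HKL F Lw.
  assert (HLw : forall x, conj_set w L x <-> L x).
  { intro x. unfold conj_set. split; intro H.
    - pose proof (Lm _ _ (Lm _ _ Lw H) (Li _ Lw)). gsimpl. auto.
    - apply Lm; [apply Lm|]; auto. }
  pose proof (fin_index_iff _ _ _ HLw (fin_index_conj w _ _ F)) as F1.
  pose proof (fin_index_meet _ _ K F1 HKL HK (conj_set_subgroup _ _ HK)) as F2.
  eapply fin_index_mono; [exact F2|]. intros x []; auto.
Qed.

Lemma commensurates_products (K S : G -> Prop) : subg K ->
  (forall w, S w -> commensurates w K) -> forall g, products S g -> commensurates g K.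
Proof.
  intros HK HS g [ws [Hws <-]]. induction Hws as [|w ws Hw _ IH]; simpl.
  - eapply fin_index_mono; [apply (fin_index_refl K HK)|].
    intros x Hx. unfold conj_set. gsimpl. auto.
  - apply commensurates_mul; auto.
Qed.

Definition core (J K : G -> Prop) : G -> Prop := fun y => forall j, J j -> conj_set j K y.

Lemma core_subgroup (J K : G -> Prop) : subg K -> subg (core J K).
Proof.
  intros [K1 [Km Ki]]. unfold core, conj_set. split; [|split].
  - intros j _. gsimpl. auto.
  - intros x y Hx Hy j Jj. pose proof (Km _ _ (Hx j Jj) (Hy j Jj)). gsimpl. auto.
  - intros x Hx j Jj. pose proof (Ki _ (Hx j Jj)). gsimpl. auto.
Qed.

Lemma core_sub (J K : G -> Prop) : J e -> forall y, core J K y -> K y.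
Proof. intros Je y Hy. pose proof (Hy e Je). unfold conj_set in *. gsimpl. auto. Qed.

Lemma core_normal (J K : G -> Prop) d y : subg J -> J d -> core J K y -> core J K (d ** y ** d^-1).
Proof.
  intros [_ [Jm Ji]] Jd Hy j Jj. pose proof (Hy (d^-1 ** j) (Jm _ _ (Ji _ Jd) Jj)).
  unfold conj_set in *. gsimpl. auto.
Qed.

(* Since the normalizer of [K] has finite index, [core J K] is a finite intersection of
   conjugates of [K], each commensurable with [K]. *)
Lemma fin_index_core (J K : G -> Prop) : subg J -> subg K ->
  (forall g, J g -> commensurates g K) -> fin_index G (fun _ => True) (fun x => norms x K) ->
  fin_index G K (core J K).
Proof.
  intros HJ HK Hcomm NK.
  destruct (fin_index_meet _ _ J NK (fun _ _ => I) HJ (norms_subgroup K)) as [R HR].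
  set (meet l := fun y => K y /\ forall r, In r l -> J r -> conj_set r K y).
  assert (Hsub : forall l, subg (meet l)).
  { intro l. destruct HK as [K1 [Km Ki]]. unfold meet, conj_set. split; [|split].
    - split; auto. intros r _ _. gsimpl. auto.
    - intros x y [Kx Hx] [Ky Hy]. split; auto. intros r Hr Jr.
      pose proof (Km _ _ (Hx r Hr Jr) (Hy r Hr Jr)). gsimpl. auto.
    - intros x [Kx Hx]. split; auto. intros r Hr Jr.
      pose proof (Ki _ (Hx r Hr Jr)). gsimpl. auto. }
  assert (Hmeet : forall l, fin_index G K (meet l)).
  { induction l as [|r l IH].
    - eapply fin_index_mono; [apply (fin_index_refl K HK)|]. intros x Hx; split; auto. intros r [].
    - destruct (classic (J r)) as [Jr | Jr].
      + pose proof (fin_index_inter K _ _ (Hsub l) (subgroup_and _ _ HK (conj_set_subgroup r _ HK))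
          (fun x H => proj1 H) HK IH (Hcomm r Jr)) as F.
        eapply fin_index_mono; [exact F|]. intros x [[Kx Hx] [_ Hc]]. split; auto.
        intros r0 [<- | Hr0] Jr0; auto.
      + eapply fin_index_mono; [exact IH|]. intros x [Kx Hx]. split; auto.
        intros r0 [<- | Hr0] Jr0; [contradiction | auto]. }
  eapply fin_index_mono; [apply (Hmeet R)|].
  intros y [Ky Hy] j Jj. destruct (HR j Jj) as [r [Hr [Jr [Nr _]]]].
  pose proof (proj2 (norms_conj K _ (r^-1 ** y ** r) Nr) (Hy r Hr Jr)).
  unfold conj_set. gsimpl. auto.
Qed.

Lemma fin_index_conj_core (J K A : G -> Prop) r : subg J -> subg A ->
  (forall x, K x -> A x) -> fin_index G A K -> fin_index G K (core J K) -> J r ->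
  fin_index G (conj_set r A) (core J K).
Proof.
  intros HJ HA HKA FA FK Jr.
  apply (fin_index_trans _ (conj_set r K)); auto.
  - apply conj_set_subgroup; auto.
  - unfold conj_set; auto.
  - apply fin_index_conj; auto.
  - eapply fin_index_mono; [apply (fin_index_conj r _ _ FK)|].
    intros x Hx. pose proof (core_normal J K r _ HJ Jr Hx). unfold conj_set in *. gsimpl. auto.
Qed.

Definition orbit (J A : G -> Prop) : G -> Prop := fun y => exists d, J d /\ conj_set d A y.

(* Finitely many normalizer cosets give finitely many distinct conjugates of [A]. *)
Lemma fin_index_orbit (J A K0 : G -> Prop) : subg J ->
  fin_index G (fun _ => True) (fun x => norms x A) ->
  (forall r, J r -> fin_index G (conj_set r A) K0) -> fin_index G (orbit J A) K0.
Proof.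
  intros HJ NA FA.
  destruct (fin_index_meet _ _ J NA (fun _ _ => I) HJ (norms_subgroup A)) as [R HR].
  destruct (list_choice (fun r s => J r -> forall y, conj_set r A y ->
      exists c, In c s /\ conj_set r A c /\ K0 (c^-1 ** y)) R) as [Ss HSs].
  { intros r _. destruct (classic (J r)) as [Jr | Jr].
    - destruct (FA r Jr) as [s Hs]. exists s. auto.
    - exists []. intro; contradiction. }
  exists (concat Ss). intros y [d [Jd Hy]].
  destruct (HR d Jd) as [r [Hr [Jr [Nr _]]]].
  assert (Hyr : conj_set r A y).
  { apply (norms_conj A _ (r^-1 ** y ** r) Nr). unfold conj_set in Hy. gsimpl. auto. }
  destruct (HSs r Hr) as [s [Hs Hps]]. destruct (Hps Jr y Hyr) as [c [Hcs [Hcc Hk]]].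
  exists c. split; [apply in_concat; eauto|]. split; auto. exists r; auto.
Qed.

Lemma products_mono (S S' : G -> Prop) :
  (forall x, S x -> S' x) -> forall x, products S x -> products S' x.
Proof.
  intros HS x [ws [Hws <-]]. exists ws. split; auto. eapply Forall_impl; [|exact Hws]; auto.
Qed.

Lemma orbit_incl (J A : G -> Prop) y : subg J -> A y -> orbit J A y.
Proof. intros HJ Hy. exists e. split; [apply HJ|]. unfold conj_set. gsimpl. auto. Qed.

Lemma orbit_sub (J A : G -> Prop) : subg J -> (forall x, A x -> J x) -> forall y, orbit J A y -> J y.
Proof.
  intros [_ [Jm Ji]] HAJ y [d [Jd Hy]]. apply HAJ in Hy.
  pose proof (Jm _ _ (Jm _ _ Jd Hy) (Ji _ Jd)). gsimpl. auto.
Qed.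

Lemma orbit_conj (J A : G -> Prop) x y : subg J -> J x -> orbit J A y -> orbit J A (x ** y ** x^-1).
Proof.
  intros HJ Jx [d [Jd Hy]]. exists (x ** d). split; [apply HJ; auto|].
  unfold conj_set in *. gsimpl. auto.
Qed.

Lemma orbit_square (J A : G -> Prop) y : subg A -> orbit J A y -> orbit J A (y ** y).
Proof.
  intros [_ [Am _]] [d [Jd Hy]]. exists d. split; auto.
  pose proof (Am _ _ Hy Hy). unfold conj_set in *. gsimpl. auto.
Qed.

Lemma fin_index_join (K L1 L2 : G -> Prop) :
  subg K -> subg L1 -> subg L2 -> (forall x, K x -> L1 x) -> (forall x, K x -> L2 x) ->
  fin_index G L1 K -> fin_index G L2 K ->
  fin_index G (fun _ => True) (fun x => norms x K) ->
  fin_index G (fun _ => True) (fun x => norms x L1) ->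
  fin_index G (fun _ => True) (fun x => norms x L2) ->
  fin_index G (products (fun x => L1 x \/ L2 x)) K.
Proof.
  intros HK H1 H2 HK1 HK2 F1 F2 NK N1 N2.
  set (J := products (fun x => L1 x \/ L2 x)).
  assert (HJ : subg J).
  { apply products_subgroup. intros x [Hx | Hx]; [left; apply H1 | right; apply H2]; auto. }
  assert (Hcomm : forall g, J g -> commensurates g K).
  { apply commensurates_products; auto. intros w [Hw | Hw].
    - apply (commensurates_of_fin_index K L1); auto.
    - apply (commensurates_of_fin_index K L2); auto. }
  set (K0 := core J K).
  assert (FK0 : fin_index G K K0) by (apply fin_index_core; auto).
  set (S := fun y => orbit J L1 y \/ orbit J L2 y).
  assert (HS : fin_index G (products S) K0).
  { apply (dietzmann J); auto.
    - apply core_subgroup; auto.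
    - intros d y Jd Hy. apply core_normal; auto.
    - intros y [Hy | Hy]; apply (orbit_sub _ _ HJ) in Hy; auto;
        intros x Hx; apply products_incl; auto.
    - intros x y Jx [Hy | Hy]; [left | right]; apply orbit_conj; auto.
    - intros y [Hy | Hy]; [left | right]; apply orbit_square; auto.
    - apply fin_index_or; apply fin_index_orbit; auto;
        intros r Jr; apply (fin_index_conj_core J K); auto. }
  assert (HSJ : forall y, products S y <-> J y).
  { intro y; split.
    - apply products_min; auto.
      intros x [Hx | Hx]; apply (orbit_sub _ _ HJ) in Hx; auto;
        intros z Hz; apply products_incl; auto.
    - apply products_mono. intros x [Hx | Hx]; [left | right]; apply orbit_incl; auto. }
  eapply fin_index_mono; [apply (fin_index_iff _ _ _ HSJ HS)|]. apply core_sub, HJ.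
Qed.

Definition fin_orbital_over (X K L : G -> Prop) : Prop :=
  orbital G X L /\ subset G K L /\ fin_index G L K.

Section Isolator.

Variable X : G -> Prop.
Hypotheses (HX : subg X) (HXo : is_open G X) (G_compact : compact G) (G_max : max_cond_closed G).

Lemma orbital_elim (K : G -> Prop) : orbital G X K ->
  subg K /\ (forall x, K x -> X x) /\ is_closed G K /\ is_open G (normalizer G X K).
Proof.
  intros [[HK HKc] [HNX [U [HU HNU]]]].
  refine (conj HK (conj (proj1 HKc) (conj (closed_in_open_subgroup X K HX HXo HKc) _))).
  apply open_iff with (A := fun x => X x /\ U x); [|apply open_inter; auto].
  intro x; split.
  - intros [Hx Hu]. apply (proj2 (HNU x Hx)); auto.
  - intro H; split; [apply HNX; auto | apply HNU; auto; apply HNX; auto].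
Qed.

Lemma orbital_intro (K V : G -> Prop) :
  subg K -> (forall x, K x -> X x) -> is_closed G K ->
  is_open G V -> V e -> (forall x, V x -> normalizer G X K x) -> orbital G X K.
Proof.
  intros HK HKX HKc HV Ve HVN. split.
  - split; auto. split; [exact HKX|]. exists K; split; auto. tauto.
  - split; [intros x []; auto|]. exists (normalizer G X K). split; [|tauto].
    eapply open_subgroup_of_nbhd; eauto. apply normalizer_subgroup; auto.
Qed.

Lemma orbital_normalizer_fin_index (K : G -> Prop) : orbital G X K ->
  fin_index G (fun _ => True) (fun x => norms x K).
Proof.
  intros Ho. destruct (orbital_elim K Ho) as [_ [_ [_ HN]]].
  apply open_subgroup_fin_index; [exact G_compact | apply norms_subgroup |].
  apply (open_subgroup_of_nbhd _ (normalizer G X K)); auto; [apply norms_subgroup | |].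
  - split; [apply HX|]. intro k. unfold norms. gsimpl. tauto.
  - intros x []; auto.
Qed.

Lemma fin_orbital_over_join (K L M : G -> Prop) : orbital G X K ->
  fin_orbital_over X K L -> fin_orbital_over X K M ->
  fin_orbital_over X K (products (fun x => L x \/ M x)).
Proof.
  intros HoK [HoL [HKL FLK]] [HoM [HKM FMK]].
  destruct (orbital_elim K HoK) as [HK [_ [HKc _]]].
  destruct (orbital_elim L HoL) as [HL [HLX [HLc HNL]]].
  destruct (orbital_elim M HoM) as [HM [HMX [HMc HNM]]].
  set (J := products (fun x => L x \/ M x)).
  assert (HJ : subg J).
  { apply products_subgroup. intros x [Hx | Hx]; [left; apply HL | right; apply HM]; auto. }
  assert (FJK : fin_index G J K).
  { apply fin_index_join; auto; eapply orbital_normalizer_fin_index; eauto. }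
  split; [|split]; auto.
  - apply (orbital_intro J (fun x => normalizer G X L x /\ normalizer G X M x)); auto.
    + apply products_min; auto. intros x [|]; auto.
    + apply (fin_index_closed J K); auto. intros x Hx; apply products_incl; auto.
    + apply open_inter; auto.
    + split; split; try apply HX; intro k; unfold norms; gsimpl; tauto.
    + intros x [[Xx Nx] [_ Nx']]. split; auto. apply norms_products.
      intro k. rewrite (Nx k), (Nx' k). tauto.
  - intros x Hx; apply products_incl; auto.
Qed.

(* The maximum condition yields a maximal member of the family, which by directedness is its
   greatest member and hence equals the subgroup it generates. *)
Lemma isolator_greatest (K : G -> Prop) : orbital G X K ->
  fin_orbital_over X K (isolator G X K) /\
  forall L, fin_orbital_over X K L -> subset G L (isolator G X K).
Proof.
  intros HoK.
  destruct (orbital_elim K HoK) as [HK _].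
  destruct (G_max (fin_orbital_over X K)) as [M [FM Mmax]].
  - intros L [HoL _]. destruct (orbital_elim L HoL) as [HL [_ [HLc _]]].
    split; auto. split; [intros x _; exact I|]. exists L; split; auto; tauto.
  - exists K. split; auto. split; [intros x; auto|]. apply fin_index_refl; auto.
  - assert (Hall : forall L, fin_orbital_over X K L -> subset G L M).
    { intros L FL x Hx. apply (Mmax _ (fin_orbital_over_join K M L HoK FM FL));
        [intros y Hy|]; apply products_incl; auto. }
    assert (Heq : isolator G X K = M).
    { apply functional_extensionality; intro x; apply propositional_extensionality; split.
      - intro H. apply H; [apply FM|]. intros L HoL HKL FLK. apply Hall. split; auto.
      - intros Hx M' _ H. destruct FM as [HoM [HKM FMK]]. apply (H M HoM HKM FMK). auto. }
    rewrite Heq. split; auto.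
Qed.

Lemma isolator_isolated (K : G -> Prop) : orbital G X K ->
  isolated_orbital G X (isolator G X K).
Proof.
  intros HoK.
  destruct (isolator_greatest K HoK) as [[HoI [HKI FIK]] Hmax].
  split; auto. intros K' HoK' HIK' Hn Hf. apply Hn, Hmax. split; [|split]; auto.
  - intros x Hx; apply HIK', HKI; auto.
  - destruct (orbital_elim K' HoK') as [HK' _].
    apply (fin_index_trans K' (isolator G X K) K); auto.
Qed.

Lemma isolator_id (K : G -> Prop) : isolated_orbital G X K ->
  isolator G X K = K.
Proof.
  intros [HoK Hiso].
  destruct (isolator_greatest K HoK) as [[HoI [HKI FIK]] _].
  apply functional_extensionality; intro x; apply propositional_extensionality; split.
  - revert x. apply NNPP. intro HIK. eapply Hiso; eauto.
  - apply HKI.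
Qed.

Lemma isolator_fin_orbital_over (K L : G -> Prop) :
  orbital G X K -> fin_orbital_over X K L -> isolator G X L = isolator G X K.
Proof.
  intros HoK [HoL [HKL FLK]].
  destruct (isolator_greatest K HoK) as [[HoIK [HKIK FIK]] HmaxK].
  destruct (isolator_greatest L HoL) as [[HoIL [HLIL FIL]] HmaxL].
  apply functional_extensionality; intro x; apply propositional_extensionality; split; revert x.
  - apply HmaxK. split; [|split]; auto.
    + intros x Hx; apply HLIL, HKL; auto.
    + destruct (orbital_elim _ HoIL) as [HIL _]. apply (fin_index_trans _ L); auto.
  - apply HmaxL. split; [|split]; auto.
    + apply HmaxK. split; auto.
    + eapply fin_index_mono; eauto.
Qed.

End Isolator.

Section OpenNormal.

Variable H : G -> Prop.
Hypotheses (G_compact : compact G) (G_max : max_cond_closed G)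
  (H_normal : is_normal G H) (H_open : is_open G H).

Let T : G -> Prop := fun _ => True.

Lemma subgroup_full : subg T.
Proof. split; [|split]; unfold T; auto. Qed.

Lemma orbital_restrict (K : G -> Prop) : orbital G T K -> orbital G H (setI G K H).
Proof.
  intros HoK. destruct H_normal as [HH Hn].
  destruct (orbital_elim T subgroup_full (open_full G) K HoK) as [HK [_ [HKc HN]]].
  apply (orbital_intro H HH _ (fun x => normalizer G T K x /\ H x)); auto.
  - apply subgroup_and; auto.
  - intros x []; auto.
  - apply closed_and; auto. apply open_subgroup_closed; auto.
  - apply open_inter; auto.
  - split; [split; [exact I|] | apply HH]. intro k; unfold norms. gsimpl. tauto.
  - intros x [[_ Nx] Hx]. split; auto. intro k. unfold setI. rewrite (Nx k). split.
    + intros [H1 H2]; split; auto.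
    + intros [H1 H2]; split; auto. pose proof (Hn x^-1 _ H2). gsimpl. auto.
Qed.

Lemma orbital_extend (K : G -> Prop) : orbital G H K -> orbital G T K.
Proof.
  intros HoK. destruct (orbital_elim H (proj1 H_normal) H_open K HoK) as [HK [HKH [HKc HN]]].
  apply (orbital_intro T subgroup_full K (normalizer G H K)); auto.
  - intros x _; exact I.
  - split; [apply H_normal|]. intro k; unfold norms; gsimpl; tauto.
  - intros x [_ Nx]; split; [exact I | auto].
Qed.

Lemma isolator_restrict (K : G -> Prop) : orbital G T K -> isolator G T (setI G K H) = isolator G T K.
Proof.
  intros HoK. destruct (orbital_elim T subgroup_full (open_full G) K HoK) as [HK _].
  symmetry. apply (isolator_fin_orbital_over T subgroup_full (open_full G) G_compact G_max).
  { apply orbital_extend, orbital_restrict; auto. }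
  split; [|split]; auto.
  - intros x []; auto.
  - pose proof (fin_index_meet _ _ K (open_subgroup_fin_index H G_compact (proj1 H_normal) H_open)
      (fun _ _ => I) HK (proj1 H_normal)) as F.
    eapply fin_index_mono; [exact F|]. intros x []; split; auto.
Qed.

Lemma isolator_extend_isolator (K : G -> Prop) : orbital G H K ->
  isolator G T (isolator G H K) = isolator G T K.
Proof.
  intros HoK. destruct (isolator_greatest H (proj1 H_normal) H_open G_compact G_max K HoK)
    as [[HoI [HKI FI]] _].
  apply (isolator_fin_orbital_over T subgroup_full (open_full G) G_compact G_max).
  { apply orbital_extend; auto. }
  split; [|split]; auto. apply orbital_extend; auto.
Qed.

Lemma isolator_restrict_isolator (K : G -> Prop) : orbital G H K ->
  isolator G H (setI G (isolator G T K) H) = isolator G H K.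
Proof.
  intros HoK. pose proof (orbital_extend K HoK) as HoKT.
  destruct (isolator_greatest T subgroup_full (open_full G) G_compact G_max K HoKT)
    as [[HoI [HKI FI]] _].
  destruct (orbital_elim H (proj1 H_normal) H_open K HoK) as [HK [HKH _]].
  destruct (orbital_elim T subgroup_full (open_full G) _ HoI) as [HI _].
  apply (isolator_fin_orbital_over H (proj1 H_normal) H_open G_compact G_max); auto.
  split; [|split].
  - apply orbital_restrict; auto.
  - intros x Hx; split; auto.
  - pose proof (fin_index_meet _ _ _ FI (fun x Hx => proj1 Hx) (subgroup_and _ _ HI (proj1 H_normal)) HK)
      as F.
    eapply fin_index_mono; [exact F|]. intros x []; auto.
Qed.

End OpenNormal.

End Profinite.

Theorem lemma1p12 (G : TopGroup) (H : G -> Prop) :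
  profinite G -> max_cond_closed G ->
  @is_normal G H -> is_open G H ->
  let GG := (fun _ : G => True) in
  (forall G', @isolated_orbital G GG G' ->
     @orbital G H (@setI G G' H) /\ @isolated_orbital G H (@isolator G H (@setI G G' H))) /\
  (forall H', @isolated_orbital G H H' ->
     @orbital G GG H' /\ @isolated_orbital G GG (@isolator G GG H')) /\
  (forall G', @isolated_orbital G GG G' ->
     @seteq G (@isolator G GG (@isolator G H (@setI G G' H))) G') /\
  (forall H', @isolated_orbital G H H' ->
     @seteq G (@isolator G H (@setI G (@isolator G GG H') H)) H').
Proof.
  intros [Hc _] Hm Hn HHo GG; subst GG.
  pose proof (subgroup_full G) as HT. pose proof (open_full G) as HTo. pose proof (proj1 Hn) as HH.
  split; [|split; [|split]].
  - intros G' [HoG' _]. pose proof (orbital_restrict G H Hn HHo G' HoG') as Ho.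
    split; [exact Ho | exact (isolator_isolated G H HH HHo Hc Hm _ Ho)].
  - intros H' [HoH' _]. pose proof (orbital_extend G H Hn HHo H' HoH') as Ho.
    split; [exact Ho | exact (isolator_isolated G _ HT HTo Hc Hm _ Ho)].
  - intros G' HiG'. pose proof (orbital_restrict G H Hn HHo G' (proj1 HiG')) as Ho.
    rewrite (isolator_extend_isolator G H Hc Hm Hn HHo _ Ho),
      (isolator_restrict G H Hc Hm Hn HHo _ (proj1 HiG')), (isolator_id G _ HT HTo Hc Hm _ HiG').
    intro; tauto.
  - intros H' HiH'.
    rewrite (isolator_restrict_isolator G H Hc Hm Hn HHo _ (proj1 HiH')),
      (isolator_id G H HH HHo Hc Hm _ HiH').
    intro; tauto.
Qed.
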